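(* Let $n\ge 1$ and let $\mathbf{P_0},\mathbf{P_1}$ be $n\times n$ transition probability matrices of irreducible and aperiodic time-homogeneous discrete-time Markov chains on $n$ states. For $t\in[0,1]$ put $\mathbf{P_t}=(1-t)\mathbf{P_0}+t\mathbf{P_1}$ and let $\pi_t$ be the unique stationary distribution of $\mathbf{P_t}$. Then, as functions of $\epsilon>0$, $$t_{sad}(\mathbf{P_0},\mathbf{P_1},\epsilon)=O\!\left(\frac{t_{mix}^4(\epsilon/2)}{\epsilon^3}\right),$$ where $t_{sad}$ and $t_{mix}(\cdot)$ are as defined in the context.
   Context: Distributions are row vectors; $\|\mu-\nu\|_{TV}=\frac12\|\mu-\nu\|_1$ is the total variation distance. For an irreducible aperiodic transition matrix $\mathbf{P}$ with stationary distribution $\pi$, the mixing time is $t_{mix}(\mathbf{P},\epsilon)=\inf\{T\in\mathbb{N}: \|\nu\mathbf{P}^T-\pi\|_{TV}\le\epsilon \text{ for all distributions }\nu\}$. Set $t_{mix}(\epsilon)=\sup_{s\in[0,1]} t_{mix}(\mathbf{P_s},\epsilon)$. The stable adiabatic time is $$t_{sad}(\mathbf{P_0},\mathbf{P_1},\epsilon)=\inf\{T\in\mathbb{N}: \|\pi_0\mathbf{P_{1/T}}\mathbf{P_{2/T}}\cdots\mathbf{P_{k/T}}-\pi_{k/T}\|_{TV}<\epsilon \text{ for all } 1\le k\le T\}.$$ *)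

From HB Require Import structures.
From mathcomp Require Import all_boot all_order all_algebra.
From mathcomp Require Import all_classical all_reals.
From mathcomp Require Import ereal.
Set Implicit Arguments. Unset Strict Implicit. Unset Printing Implicit Defensive.
Import Order.TTheory GRing.Theory Num.Theory.
Local Open Scope ring_scope.
Local Open Scope classical_set_scope.

Section MarkovDefs.
Variable R : realType.
Variable n : nat.
(* State space {0,...,n}, i.e. n.+1 >= 1 states. *)

Definition is_distribution (mu : 'rV[R]_n.+1) : Prop :=
  (forall i, 0 <= mu 0 i) /\ \sum_i mu 0 i = 1.

Definition is_transition (P : 'M[R]_n.+1) : Prop :=
  (forall i j, 0 <= P i j) /\ (forall i, \sum_j P i j = 1).

Definition irreducible (P : 'M[R]_n.+1) : Prop :=
  forall i j, exists m : nat, 0 < (P ^+ m) i j.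

(* gcd {m >= 1 : P^m(i,i) > 0} = 1 for every state i *)
Definition aperiodic (P : 'M[R]_n.+1) : Prop :=
  forall i, forall d : nat,
    (forall m : nat, (0 < m)%N -> 0 < (P ^+ m) i i -> (d %| m)%N) -> d = 1%N.

Definition is_stationary (P : 'M[R]_n.+1) (p : 'rV[R]_n.+1) : Prop :=
  is_distribution p /\ p *m P = p.

Definition tv (mu nu : 'rV[R]_n.+1) : R :=
  2^-1 * \sum_i `|mu 0 i - nu 0 i|.

Definition Pt (P0 P1 : 'M[R]_n.+1) (t : R) : 'M[R]_n.+1 :=
  (1 - t) *: P0 + t *: P1.

(* t_mix(P, eps) = inf { T in N (T >= 1) : forall nu, ||nu P^T - pi||_TV <= eps },
   as an extended real (+oo if the set is empty). *)
Definition tmix_of (P : 'M[R]_n.+1) (pi : 'rV[R]_n.+1) (eps : R) : \bar R :=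
  ereal_inf [set (T%:R)%:E | T in
    [set T : nat | (1 <= T)%N /\
       forall nu, is_distribution nu -> tv (nu *m P ^+ T) pi <= eps]].

Definition tmix (P0 P1 : 'M[R]_n.+1) (pi : R -> 'rV[R]_n.+1) (eps : R) : \bar R :=
  ereal_sup [set tmix_of (Pt P0 P1 s) (pi s) eps | s in [set s : R | 0 <= s <= 1]].

Definition Pprod (P0 P1 : 'M[R]_n.+1) (T k : nat) : 'M[R]_n.+1 :=
  \prod_(i < k) Pt P0 P1 (i.+1%:R / T%:R).

Definition tsad (P0 P1 : 'M[R]_n.+1) (pi : R -> 'rV[R]_n.+1) (eps : R) : \bar R :=
  ereal_inf [set (T%:R)%:E | T in
    [set T : nat | (1 <= T)%N /\
       forall k : nat, (1 <= k <= T)%N ->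
         tv (pi 0 *m Pprod P0 P1 T k) (pi (k%:R / T%:R)) < eps]].

End MarkovDefs.

(* Fix M >= t_mix(eps/2) and a horizon T of order M^2/eps. Up to step k, the
   adiabatic product is a distribution rho followed by the last M factors
   P_{(i+1)/T} (padded by factors P_0, which fix pi_0, when k < M). Each of
   these factors moves a distribution by at most M/T in total variation away
   from P_{k/T}, so the product is within M^2/T <= eps/2 of rho P_{k/T}^M,
   which is within eps/2 of pi_{k/T} by mixing. Hence t_sad = O(t_mix^2/eps),
   which gives the claim since t_mix >= 1 and eps < 1. *)

From HB Require Import structures.
From mathcomp Require Import all_boot all_order all_algebra.
From mathcomp Require Import all_classical all_reals.
From mathcomp Require Import ereal.
From mathcomp Require Import ring lra zify.
Import Order.TTheory GRing.Theory Num.Theory.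
Set Implicit Arguments. Unset Strict Implicit.
Local Open Scope ring_scope.

Section TotalVariation.
Variables (R : realType) (n : nat).
Implicit Types (u v x y z : 'rV[R]_n.+1) (P : 'M[R]_n.+1).

Definition l1norm v : R := \sum_i `|v 0 i|.

Lemma tvE x y : tv x y = 2^-1 * l1norm (x - y).
Proof. by rewrite /tv /l1norm; congr (_ * _); apply: eq_bigr => i _; rewrite !mxE. Qed.

Lemma l1normD u v : l1norm (u + v) <= l1norm u + l1norm v.
Proof.
rewrite /l1norm -big_split /=; apply: ler_sum => i _; rewrite mxE; exact: ler_normD.
Qed.

Lemma l1normZ a v : l1norm (a *: v) = `|a| * l1norm v.
Proof. by rewrite /l1norm mulr_sumr; apply: eq_bigr => i _; rewrite mxE normrM. Qed.

Lemma l1norm_mulmx_le v P : is_transition P -> l1norm (v *m P) <= l1norm v.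
Proof.
move=> [P_ge0 P_sum1]; rewrite /l1norm.
apply: (@le_trans _ _ (\sum_j \sum_i `|v 0 i| * P i j)).
  apply: ler_sum => j _; rewrite mxE; apply: le_trans (ler_norm_sum _ _ _) _.
  by apply: ler_sum => i _; rewrite normrM (ger0_norm (P_ge0 i j)).
by rewrite exchange_big /=; apply: ler_sum => i _; rewrite -mulr_sumr P_sum1 mulr1.
Qed.

Lemma tv_triangle x y z : tv x z <= tv x y + tv y z.
Proof.
rewrite !tvE -mulrDr ler_wpM2l //.
have -> : x - z = (x - y) + (y - z) by rewrite addrA subrK.
exact: l1normD.
Qed.

Lemma tv_mulmx_le x y P : is_transition P -> tv (x *m P) (y *m P) <= tv x y.
Proof. by move=> tP; rewrite !tvE ler_wpM2l // -mulmxBl; apply: l1norm_mulmx_le. Qed.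

Lemma tv_le1 x y : is_distribution x -> is_distribution y -> tv x y <= 1.
Proof.
move=> [x_ge0 x_sum1] [y_ge0 y_sum1].
have : \sum_i `|x 0 i - y 0 i| <= \sum_i (x 0 i + y 0 i).
  by apply: ler_sum => i _; apply: le_trans (ler_normB _ _) _; rewrite !ger0_norm.
by rewrite big_split /= x_sum1 y_sum1 /tv; lra.
Qed.

Lemma distribution_mulmx x P :
  is_distribution x -> is_transition P -> is_distribution (x *m P).
Proof.
move=> [x_ge0 x_sum1] [P_ge0 P_sum1]; split.
  by move=> j; rewrite mxE; apply: sumr_ge0 => i _; apply: mulr_ge0.
under eq_bigr do rewrite mxE.
rewrite exchange_big /= -x_sum1; apply: eq_bigr => i _.
by rewrite -mulr_sumr P_sum1 mulr1.
Qed.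

Lemma distribution_mulmx_pow x P m :
  is_distribution x -> is_transition P -> is_distribution (x *m P ^+ m).
Proof.
move=> dx tP; elim: m => [|m IH]; first by rewrite expr0 mulmx1.
by rewrite exprSr -mulmxE mulmxA; apply: distribution_mulmx.
Qed.

Lemma mulmx_pow_fixed x P m : x *m P = x -> x *m P ^+ m = x.
Proof.
move=> xP; elim: m => [|m IH]; first by rewrite expr0 mulmx1.
by rewrite exprSr -mulmxE mulmxA IH xP.
Qed.

End TotalVariation.

Lemma frac_in01 {R : realFieldType} (a T : nat) :
  (0 < T)%N -> (a <= T)%N -> 0 <= (a%:R / T%:R : R) <= 1.
Proof.
move=> T_gt0 aT; rewrite divr_ge0 //= ler_pdivrMr ?ltr0n // mul1r ler_nat //.
Qed.

Lemma dist_frac_le {R : realFieldType} (a b c T : nat) :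
  (0 < T)%N -> (a <= b <= a + c)%N ->
  `|a%:R / T%:R - b%:R / T%:R| <= c%:R / T%:R :> R.
Proof.
move=> T_gt0 /andP[ab bac]; have T_pos : 0 < T%:R :> R by rewrite ltr0n.
rewrite -mulrBl normrM [`|_^-1|]gtr0_norm ?invr_gt0 // ler_pM2r ?invr_gt0 //.
have ab' : (a%:R : R) <= b%:R by rewrite ler_nat.
have bac' : (b%:R : R) <= a%:R + c%:R by rewrite -natrD ler_nat.
by rewrite ler_norml; apply/andP; split; lra.
Qed.

Section Interpolation.
Variables (R : realType) (n : nat) (P0 P1 : 'M[R]_n.+1).
Hypotheses (tP0 : is_transition P0) (tP1 : is_transition P1).
Local Notation P := (Pt P0 P1).

Lemma Pt_transition (t : R) : 0 <= t <= 1 -> is_transition (P t).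
Proof.
move=> /andP[t_ge0 t_le1]; case: tP0 => P0_ge0 P0_sum1; case: tP1 => P1_ge0 P1_sum1.
split=> [i j|i]; first by rewrite !mxE; apply: addr_ge0; apply: mulr_ge0 => //; lra.
under eq_bigr do rewrite !mxE.
by rewrite big_split /= -!mulr_sumr P0_sum1 P1_sum1; lra.
Qed.

Lemma PtB (a b : R) : P a - P b = (a - b) *: (P1 - P0).
Proof. by apply/matrixP => i j; rewrite !mxE; ring. Qed.

Lemma tv_mulmx_Pt_le x (a b : R) :
  is_distribution x -> tv (x *m P a) (x *m P b) <= `|a - b|.
Proof.
move=> dx; rewrite tvE -mulmxBr PtB -scalemxAr l1normZ mulmxBr mulrCA.
rewrite -[leRHS]mulr1 ler_wpM2l // -tvE.
exact: tv_le1 (distribution_mulmx dx tP1) (distribution_mulmx dx tP0).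
Qed.

Lemma distribution_mulmx_prod_Pt x (ts : seq R) :
  is_distribution x -> (forall t, t \in ts -> 0 <= t <= 1) ->
  is_distribution (x *m \prod_(t <- ts) P t).
Proof.
move=> dx; elim/last_ind: ts => [|ts t IH] ts01; first by rewrite big_nil mulmx1.
rewrite big_rcons /= -mulmxE mulmxA; apply: distribution_mulmx.
  by apply: IH => u uts; apply: ts01; rewrite mem_rcons inE uts orbT.
by apply: Pt_transition; apply: ts01; rewrite mem_rcons inE eqxx.
Qed.

Lemma tv_prod_Pt_pow_le x (ts : seq R) (s d : R) :
  is_distribution x -> 0 <= s <= 1 ->
  (forall t, t \in ts -> 0 <= t <= 1 /\ `|t - s| <= d) ->
  tv (x *m \prod_(t <- ts) P t) (x *m P s ^+ size ts) <= (size ts)%:R * d.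
Proof.
move=> dx s01; elim/last_ind: ts => [|ts t IH] ts_near.
  rewrite big_nil expr0 mulmx1 mul0r tvE subrr /l1norm big1 ?mulr0 // => i _.
  by rewrite mxE normr0.
have ts_near' u : u \in ts -> 0 <= u <= 1 /\ `|u - s| <= d.
  by move=> uts; apply: ts_near; rewrite mem_rcons inE uts orbT.
have [_ t_near] : 0 <= t <= 1 /\ `|t - s| <= d.
  by apply: ts_near; rewrite mem_rcons inE eqxx.
rewrite big_rcons /= size_rcons exprSr -!mulmxE !mulmxA.
set y := x *m _; have dy : is_distribution y.
  by apply: distribution_mulmx_prod_Pt => // u /ts_near' [].
apply: le_trans (tv_triangle _ (y *m P s) _) _.
rewrite -natr1 mulrDl mul1r [leRHS]addrC; apply: lerD.
  exact: le_trans (tv_mulmx_Pt_le _ _ dy) t_near.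
exact: le_trans (tv_mulmx_le _ _ (Pt_transition s01)) (IH ts_near').
Qed.

Variable pi : R -> 'rV[R]_n.+1.
Hypothesis pi_stationary : forall s : R, 0 <= s <= 1 -> is_stationary (P s) (pi s).

(* The truncated k - M is 0 when k < M; the window is then padded with M - k
   factors P 0, which fix pi 0. *)
Lemma Pprod_window M T k : (0 < T)%N -> (k <= T)%N ->
  exists x (ts : seq R), [/\ is_distribution x, size ts = M,
    (forall t, t \in ts -> 0 <= t <= 1 /\ `|t - k%:R / T%:R| <= M%:R / T%:R) &
    pi 0 *m Pprod P0 P1 T k = x *m \prod_(t <- ts) P t].
Proof.
move=> T_gt0 kT; set f := fun i : nat => i.+1%:R / T%:R : R.
have PprodE m : Pprod P0 P1 T m = \prod_(0 <= i < m) P (f i).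
  by rewrite /Pprod big_mkord.
have [d0 pi0P0] : is_stationary (P 0) (pi 0) by apply: pi_stationary; rewrite lexx ler01.
exists (pi 0 *m Pprod P0 P1 T (k - M)),
  (nseq (M - k) 0 ++ [seq f i | i <- index_iota (k - M) k]); split.
- rewrite PprodE -(big_map f xpredT P); apply: distribution_mulmx_prod_Pt => // t /mapP[i].
  rewrite mem_index_iota => /andP[_ ikM] ->; apply: frac_in01 => //; lia.
- by rewrite size_cat size_nseq size_map size_iota; lia.
- move=> t; rewrite mem_cat => /orP[|/mapP[i]].
    rewrite mem_nseq => /andP[Mk /eqP->]; split; first by rewrite lexx ler01.
    have := dist_frac_le (R:=R) (a:=0) (b:=k) (c:=M) T_gt0.
    by rewrite mulr0n mul0r; apply; lia.
  rewrite mem_index_iota => /andP[kMi ik] ->.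
  split; first by apply: frac_in01 => //; apply: leq_trans ik kT.
  by rewrite (dist_frac_le T_gt0) //; lia.
- rewrite big_cat /= -mulmxE mulmxA big_nseq.
  rewrite (_ : iter _ _ _ = P 0 ^+ (M - k)); last first.
    by elim: (M - k)%N => //= m ->; rewrite exprS.
  have -> : pi 0 *m Pprod P0 P1 T (k - M) *m P 0 ^+ (M - k)
          = pi 0 *m Pprod P0 P1 T (k - M).
    case: (leqP M k) => [Mk|kM]; first by rewrite (eqP Mk) expr0 mulmx1.
    by rewrite (_ : k - M = 0)%N ?PprodE ?big_nil ?mulmx1 ?mulmx_pow_fixed //; lia.
  by rewrite -mulmxA mulmxE big_map !PprodE -big_cat_nat //; lia.
Qed.

Lemma tv_adiabatic_lt M T (eps : R) :
  (forall s : R, 0 <= s <= 1 -> forall x, is_distribution x ->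
     tv (x *m P s ^+ M) (pi s) <= eps / 2) ->
  (0 < T)%N -> M%:R * (M%:R / T%:R) < eps / 2 ->
  forall k, (k <= T)%N -> tv (pi 0 *m Pprod P0 P1 T k) (pi (k%:R / T%:R)) < eps.
Proof.
move=> mixing T_gt0 window_small k kT.
have [x [ts [dx size_ts ts_near ->]]] := Pprod_window M T_gt0 kT.
have s01 := frac_in01 (R:=R) T_gt0 kT.
apply: le_lt_trans (tv_triangle _ (x *m P (k%:R / T%:R) ^+ M) _) _.
have := tv_prod_Pt_pow_le dx s01 ts_near; rewrite size_ts.
by have := mixing _ s01 _ dx; lra.
Qed.

Lemma tsad_le_of_mixing M T (eps : R) :
  (forall s : R, 0 <= s <= 1 -> forall x, is_distribution x ->
     tv (x *m P s ^+ M) (pi s) <= eps / 2) ->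
  0 < eps -> 2 * M%:R ^+ 2 / eps < T%:R ->
  (tsad P0 P1 pi eps <= (T%:R)%:E)%E.
Proof.
move=> mixing eps_gt0 T_large.
have T_pos : 0 < T%:R :> R.
  by apply: le_lt_trans T_large; rewrite divr_ge0 ?mulr_ge0 ?exprn_ge0 // ltW.
have T_gt0 : (0 < T)%N by rewrite -(ltr0n R).
apply: ereal_inf_lbound; exists T => //; split => // k /andP[_ kT].
apply: tv_adiabatic_lt mixing T_gt0 _ k kT.
rewrite mulrA ltr_pdivrMr //; move: T_large; rewrite ltr_pdivrMr // expr2; lra.
Qed.

End Interpolation.

Section MixingTime.
Variables (R : realType) (n : nat).
Implicit Types (P : 'M[R]_n.+1) (p : 'rV[R]_n.+1).

Lemma tmix_of_ge1 P p (eps : R) : (1%:E <= tmix_of P p eps)%E.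
Proof. by apply/ereal_infP => _ [T [T_ge1 _] <-]; rewrite lee_fin ler1n. Qed.

Lemma tv_mulmx_pow_le_of_tmix_of_lt P p (eps : R) M :
  is_transition P -> (tmix_of P p eps < (M.+1%:R)%:E)%E ->
  forall x, is_distribution x -> tv (x *m P ^+ M) p <= eps.
Proof.
move=> tP /ereal_inf_lt[_ [T [_ mixed] <-]]; rewrite lte_fin ltr_nat ltnS => TM x dx.
rewrite -(subnK TM) exprD -mulmxE mulmxA.
exact/mixed/distribution_mulmx_pow.
Qed.

Lemma tmix_of_le_tmix P0 P1 (pi : R -> 'rV[R]_n.+1) eps s : 0 <= s <= 1 ->
  (tmix_of (Pt P0 P1 s) (pi s) eps <= tmix P0 P1 pi eps)%E.
Proof. by move=> s01; apply: ereal_sup_ubound; exists s. Qed.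

Lemma tmix_ge1 P0 P1 (pi : R -> 'rV[R]_n.+1) eps : (1%:E <= tmix P0 P1 pi eps)%E.
Proof.
apply: le_trans (tmix_of_le_tmix P0 P1 pi eps (s:=0) _); first exact: tmix_of_ge1.
by rewrite lexx ler01.
Qed.

End MixingTime.

Lemma quadratic_le_quartic (R : realType) (T M : nat) (x eps : R) :
  0 < eps < 1 -> (1 <= M)%N -> M%:R <= x ->
  T%:R <= 2 * M%:R ^+ 2 / eps + 1 -> T%:R <= 3 * (x * x * x * x) * eps ^- 3.
Proof.
move=> /andP[eps_gt0 eps_lt1] M_ge1 Mx T_le.
have M_ge1r : 1 <= M%:R :> R by rewrite ler1n.
have inv_ge1 : 1 <= eps^-1 by rewrite invf_ge1 // ltW.
rewrite -exprVn; move: T_le inv_ge1; rewrite expr2 -/(_ / eps).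
set y := eps^-1 => T_le y_ge1.
have MM2 : M%:R * M%:R <= x * x :> R by apply: ler_pM; lra.
have MM : M%:R * M%:R <= x * x * x * x :> R.
  by apply: le_trans MM2 _; rewrite -mulrA ler_peMr; nra.
have yy : y <= y ^+ 3 by rewrite !exprS expr0 mulr1; nra.
have MMy : M%:R * M%:R * y <= x * x * x * x * y ^+ 3 :> R by apply: ler_pM; nra.
nra.
Qed.

Theorem theorem3 (R : realType) (n : nat) (P0 P1 : 'M[R]_n.+1)
    (pi : R -> 'rV[R]_n.+1) :
  is_transition P0 -> irreducible P0 -> aperiodic P0 ->
  is_transition P1 -> irreducible P1 -> aperiodic P1 ->
  (forall s : R, 0 <= s <= 1 -> is_stationary (Pt P0 P1 s) (pi s)) ->
  exists C : R, 0 < C /\ exists eps0 : R, 0 < eps0 /\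
    forall eps : R, 0 < eps < eps0 ->
      (tsad P0 P1 pi eps <=
        C%:E * (tmix P0 P1 pi (eps / 2) * tmix P0 P1 pi (eps / 2)
                * tmix P0 P1 pi (eps / 2) * tmix P0 P1 pi (eps / 2))
        * (eps ^- 3)%:E)%E.
Proof.
move=> tP0 _ _ tP1 _ _ pi_stationary.
exists 3; split => //; exists 1; split => // eps eps01.
have /andP[eps_gt0 _] := eps01.
have := tmix_ge1 P0 P1 pi (eps / 2); have := @tmix_of_le_tmix _ _ P0 P1 pi (eps / 2).
case: (tmix P0 P1 pi (eps / 2)) => [x| |] le_tmix; [| |by []]; last first.
  have eps3_gt0 : 0 < eps ^- 3 by rewrite invr_gt0 exprn_gt0.
  by move=> _; rewrite !mulyy mulry gtr0_sg // mul1e mulyr gtr0_sg // mul1e leey.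
rewrite lee_fin => x_ge1; set M := Num.trunc x.
have Mx : M%:R <= x by rewrite truncn_le; lra.
have M_ge1 : (1 <= M)%N by rewrite truncn_gt_nat.
have mixing s : 0 <= s <= 1 -> forall y, is_distribution y ->
    tv (y *m Pt P0 P1 s ^+ M) (pi s) <= eps / 2.
  move=> s01; apply: tv_mulmx_pow_le_of_tmix_of_lt; first exact: Pt_transition.
  by apply: le_lt_trans (le_tmix s s01) _; rewrite lte_fin real_truncnS_gt ?ger0_real //; lra.
set K := 2 * M%:R ^+ 2 / eps.
have K_ge0 : 0 <= K by rewrite divr_ge0 ?mulr_ge0 ?exprn_ge0 // ltW.
apply: le_trans (tsad_le_of_mixing tP0 tP1 pi_stationary mixing eps_gt0 _) _.
  by apply: real_truncnS_gt; rewrite ger0_real.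
rewrite -!EFinM lee_fin; apply: quadratic_le_quartic M_ge1 Mx _ => //.
by rewrite -natr1 lerD2r truncn_le.
Qed.
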